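(* Let $J\subseteq\mathbb{R}$ be an interval, $f:J\to\mathbb{R}$ convex, $a,b\in J$, $\nu\in[0,1]$, $r=\min\{\nu,1-\nu\}$, $R=\max\{\nu,1-\nu\}$, and $$\Phi_f(\nu):=\int_0^1\left(\frac{f\big(a\nabla_{\nu\lambda}b\big)+f\big(b\nabla_{(1-\nu)\lambda}a\big)}{2}-f\Big(a\nabla_{\frac{1+\lambda(2\nu-1)}{2}}b\Big)\right)d\lambda,\qquad \Delta_f:=\frac{f(a)+f(b)}{2}-f\Big(\frac{a+b}{2}\Big).$$ Then $$2\big(r\,\Phi_f(\nu)+\widetilde r(\nu)\,\Delta_f\big)\le f(a)\nabla_\nu f(b)-f\big(a\nabla_\nu b\big)\le 2\big(R\,\Phi_f(\nu)+\widetilde R(\nu)\,\Delta_f\big).$$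
   Context: For real $x,y$ and $\mu\in[0,1]$, $x\nabla_\mu y:=(1-\mu)x+\mu y$. For $\lambda\in[0,1]$ let $r_1(\lambda)=\min\{\nu\lambda,1-\nu\lambda\}$, $r_2(\lambda)=\min\{(1-\nu)\lambda,1-(1-\nu)\lambda\}$, $R_1(\lambda)=\max\{\nu\lambda,1-\nu\lambda\}$, $R_2(\lambda)=\max\{(1-\nu)\lambda,1-(1-\nu)\lambda\}$, and $\widetilde r(\nu):=\int_0^1((1-\nu)r_1(\lambda)+\nu r_2(\lambda))d\lambda$, $\widetilde R(\nu):=\int_0^1((1-\nu)R_1(\lambda)+\nu R_2(\lambda))d\lambda$. *)

From Stdlib Require Import Reals.
From Coquelicot Require Import Coquelicot.
Open Scope R_scope.

Definition nabla (x y mu : R) : R := (1 - mu) * x + mu * y.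

Definition is_interval (J : R -> Prop) : Prop :=
  forall x y z, J x -> J z -> x <= y <= z -> J y.

Definition convex_on (J : R -> Prop) (f : R -> R) : Prop :=
  forall x y t, J x -> J y -> 0 <= t <= 1 ->
    f (nabla x y t) <= nabla (f x) (f y) t.

Definition r1 (nu lam : R) : R := Rmin (nu * lam) (1 - nu * lam).
Definition r2 (nu lam : R) : R := Rmin ((1 - nu) * lam) (1 - (1 - nu) * lam).
Definition R1 (nu lam : R) : R := Rmax (nu * lam) (1 - nu * lam).
Definition R2 (nu lam : R) : R := Rmax ((1 - nu) * lam) (1 - (1 - nu) * lam).

Definition rtilde (nu : R) : R :=
  RInt (fun lam => (1 - nu) * r1 nu lam + nu * r2 nu lam) 0 1.
Definition Rtilde (nu : R) : R :=
  RInt (fun lam => (1 - nu) * R1 nu lam + nu * R2 nu lam) 0 1.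

Definition Phi_f (f : R -> R) (a b nu : R) : R :=
  RInt (fun lam =>
    (f (nabla a b (nu * lam)) + f (nabla b a ((1 - nu) * lam))) / 2
    - f (nabla a b ((1 + lam * (2 * nu - 1)) / 2))) 0 1.

Definition Delta_f (f : R -> R) (a b : R) : R :=
  (f a + f b) / 2 - f ((a + b) / 2).

From Pilot Require Import Defs.
From Stdlib Require Import Reals Lra Psatz Lia.
From Coquelicot Require Import Coquelicot.
Open Scope R_scope.

(* Put P = a \nabla_{nu lam} b and Q = b \nabla_{(1-nu) lam} a.  Then
   a \nabla_nu b = P \nabla_nu Q, so the Jensen gap of f at nu splits exactly as
   (1-nu) gap(a,b,nu lam) + nu gap(b,a,(1-nu) lam) + gap(P,Q,nu).  The classical
   two-sided estimate 2 min(t,1-t) Delta <= gap(x,y,t) <= 2 max(t,1-t) Delta,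
   applied to each piece, yields for every lam a pointwise form of the
   inequality in which Delta_f(P,Q) is the integrand of Phi_f; integrating over
   lam in [0,1] concludes.  The integrals exist because a convex function on a
   segment is bounded and continuous in the interior, hence Riemann integrable. *)

Lemma ratio_unit_interval p q : 0 <= p <= q -> 0 < q -> 0 <= p / q <= 1.
Proof.
  intros Hp Hq; split.
  - apply Rmult_le_pos; [lra | apply Rlt_le, Rinv_0_lt_compat; exact Hq].
  - apply Rmult_le_reg_r with q; [exact Hq|].
    unfold Rdiv; rewrite Rmult_assoc, Rinv_l by lra; lra.
Qed.

Lemma is_interval_nabla J x y t :
  is_interval J -> J x -> J y -> 0 <= t <= 1 -> J (nabla x y t).
Proof.
  intros HJ Hx Hy Ht; unfold nabla.
  destruct (Rle_dec x y).
  - apply (HJ x _ y Hx Hy); nra.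
  - apply (HJ y _ x Hy Hx); nra.
Qed.


(** * Jensen gaps *)

Definition jensen_gap (f : R -> R) (x y t : R) : R :=
  nabla (f x) (f y) t - f (nabla x y t).

Lemma Delta_f_sym f x y : Delta_f f y x = Delta_f f x y.
Proof. unfold Delta_f; rewrite (Rplus_comm y x); lra. Qed.

Lemma jensen_gap_sym f x y t : jensen_gap f y x (1 - t) = jensen_gap f x y t.
Proof.
  unfold jensen_gap; replace (nabla y x (1 - t)) with (nabla x y t) by (unfold nabla; ring).
  unfold nabla; ring.
Qed.

Lemma jensen_gap_small_weight J f x y t :
  is_interval J -> convex_on J f -> J x -> J y -> 0 <= t <= 1/2 ->
  2 * t * Delta_f f x y <= jensen_gap f x y t <= 2 * (1 - t) * Delta_f f x y.
Proof.
  intros HJ Hf Hx Hy Ht.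
  assert (Hm : J ((x + y) / 2)).
  { replace ((x + y) / 2) with (nabla x y (1/2)) by (unfold nabla; field).
    apply is_interval_nabla; auto; lra. }
  assert (Hxy : J (nabla x y t)) by (apply is_interval_nabla; auto; lra).
  unfold jensen_gap, Delta_f; split.
  - (* [x \nabla_t y] lies on the segment from [x] to the midpoint *)
    assert (H := Hf x ((x + y) / 2) (2 * t) Hx Hm ltac:(lra)).
    replace (nabla x ((x + y) / 2) (2 * t)) with (nabla x y t) in H
      by (unfold nabla; field).
    unfold nabla in *; lra.
  - (* the midpoint lies on the segment from [x \nabla_t y] to [y] *)
    set (s := (1 - 2 * t) / (2 * (1 - t))).
    assert (Hs : 0 <= s <= 1) by (apply ratio_unit_interval; lra).
    assert (H := Hf (nabla x y t) y s Hxy Hy Hs).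
    replace (nabla (nabla x y t) y s) with ((x + y) / 2) in H
      by (unfold nabla, s; field; lra).
    apply (Rmult_le_compat_l (2 * (1 - t))) in H; [|lra].
    replace (2 * (1 - t) * nabla (f (nabla x y t)) (f y) s)
      with (f (nabla x y t) + (1 - 2 * t) * f y) in H by (unfold nabla, s; field; lra).
    unfold nabla in *; lra.
Qed.

Lemma jensen_gap_bounds J f x y t :
  is_interval J -> convex_on J f -> J x -> J y -> 0 <= t <= 1 ->
  2 * Rmin t (1 - t) * Delta_f f x y <= jensen_gap f x y t
  <= 2 * Rmax t (1 - t) * Delta_f f x y.
Proof.
  intros HJ Hf Hx Hy Ht.
  destruct (Rle_dec t (1/2)).
  - rewrite Rmin_left, Rmax_right by lra.
    apply (jensen_gap_small_weight J); auto; lra.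
  - rewrite Rmin_right, Rmax_left by lra.
    assert (H := jensen_gap_small_weight J f y x (1 - t) HJ Hf Hy Hx ltac:(lra)).
    rewrite jensen_gap_sym, Delta_f_sym in H.
    replace (1 - (1 - t)) with t in H by ring; exact H.
Qed.

Lemma jensen_gap_split f a b nu lam :
  let P := nabla a b (nu * lam) in
  let Q := nabla a b (1 - (1 - nu) * lam) in
  jensen_gap f a b nu
  = (1 - nu) * jensen_gap f a b (nu * lam) + nu * jensen_gap f b a ((1 - nu) * lam)
    + jensen_gap f P Q nu.
Proof.
  intros P Q; unfold jensen_gap.
  replace (nabla P Q nu) with (nabla a b nu) by (unfold P, Q, nabla; ring).
  replace (nabla b a ((1 - nu) * lam)) with Q by (unfold Q, nabla; ring).
  unfold P, nabla; ring.
Qed.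

Definition Phi_integrand (f : R -> R) (a b nu lam : R) : R :=
  Delta_f f (nabla a b (nu * lam)) (nabla a b (1 - (1 - nu) * lam)).

Definition r_weight (nu lam : R) : R := (1 - nu) * r1 nu lam + nu * r2 nu lam.
Definition R_weight (nu lam : R) : R := (1 - nu) * Defs.R1 nu lam + nu * R2 nu lam.

Lemma jensen_gap_pointwise_bounds J f a b nu lam :
  is_interval J -> convex_on J f -> J a -> J b -> 0 <= nu <= 1 -> 0 <= lam <= 1 ->
  2 * (Rmin nu (1 - nu) * Phi_integrand f a b nu lam + r_weight nu lam * Delta_f f a b)
    <= jensen_gap f a b nu
  /\ jensen_gap f a b nu
    <= 2 * (Rmax nu (1 - nu) * Phi_integrand f a b nu lam + R_weight nu lam * Delta_f f a b).
Proof.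
  intros HJ Hf Ha Hb Hnu Hlam.
  rewrite (jensen_gap_split f a b nu lam); cbv zeta.
  assert (G1 := jensen_gap_bounds J f a b (nu * lam) HJ Hf Ha Hb ltac:(nra)).
  assert (G2 := jensen_gap_bounds J f b a ((1 - nu) * lam) HJ Hf Hb Ha ltac:(nra)).
  assert (G3 := jensen_gap_bounds J f _ _ nu HJ Hf
                  (is_interval_nabla J a b (nu * lam) HJ Ha Hb ltac:(nra))
                  (is_interval_nabla J a b (1 - (1 - nu) * lam) HJ Ha Hb ltac:(nra)) Hnu).
  rewrite Delta_f_sym in G2.
  unfold Phi_integrand, r_weight, R_weight, r1, r2, Defs.R1, R2.
  destruct G1 as [G1l G1u], G2 as [G2l G2u], G3 as [G3l G3u].
  assert (Hnu' : 0 <= 1 - nu) by lra.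
  apply (Rmult_le_compat_l _ _ _ Hnu') in G1l, G1u.
  apply (Rmult_le_compat_l _ _ _ (proj1 Hnu)) in G2l, G2u.
  split; lra.
Qed.

(** * Riemann integrability of convex functions *)

Lemma continuity_pt_lipschitz (h : R -> R) x d C : 0 < d -> 0 <= C ->
  (forall y, Rabs (y - x) < d -> Rabs (h y - h x) <= C * Rabs (y - x)) ->
  continuity_pt h x.
Proof.
  intros Hd HC Hh eps Heps.
  exists (Rmin d (eps / (C + 1))); split.
  - apply Rmin_pos; [lra | apply Rdiv_lt_0_compat; lra].
  - intros y [_ Hy]; simpl in *; unfold R_dist in *.
    assert (Hyd : Rabs (y - x) < d) by (eapply Rlt_le_trans; [exact Hy | apply Rmin_l]).
    assert (Hye : Rabs (y - x) * (C + 1) < eps).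
    { apply Rmult_lt_reg_r with (/ (C + 1)); [apply Rinv_0_lt_compat; lra|].
      rewrite Rmult_assoc, Rinv_r, Rmult_1_r by lra.
      eapply Rlt_le_trans; [exact Hy | apply Rmin_r]. }
    assert (H := Hh y Hyd); assert (0 <= Rabs (y - x)) by apply Rabs_pos; nra.
Qed.

Lemma Rabs_le_scaled_bounds z u v h :
  0 <= h -> h * u <= z <= h * v -> Rabs z <= h * (Rabs u + Rabs v).
Proof.
  intros Hh [Hl Hr].
  assert (Hu := Rmult_le_compat_l h _ _ Hh (Rabs_maj2 u)).
  assert (Hv := Rmult_le_compat_l h _ _ Hh (Rle_abs v)).
  assert (Hu' := Rmult_le_pos h _ Hh (Rabs_pos u)).
  assert (Hv' := Rmult_le_pos h _ Hh (Rabs_pos v)).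
  apply Rabs_le; split; lra.
Qed.

Definition clamp (lo hi t : R) : R := Rmax lo (Rmin hi t).

Lemma clamp_between lo hi t : lo <= hi -> lo <= clamp lo hi t <= hi.
Proof. intros H; unfold clamp, Rmax, Rmin; repeat destruct Rle_dec; lra. Qed.

Lemma clamp_id lo hi t : lo <= t <= hi -> clamp lo hi t = t.
Proof. intros H; unfold clamp, Rmax, Rmin; repeat destruct Rle_dec; lra. Qed.

Lemma clamp_continuity_pt lo hi t : continuity_pt (clamp lo hi) t.
Proof.
  apply (continuity_pt_lipschitz _ t 1 1); try lra; intros y _.
  unfold clamp, Rmax, Rmin; repeat destruct Rle_dec; unfold Rabs;
    repeat destruct Rcase_abs; lra.
Qed.

Definition edge_step (a b d M t : R) : R :=
  if Rle_dec (a + d) t then if Rle_dec t (b - d) then 0 else M else M.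

Lemma edge_step_adapted a b d M : 0 < d -> a + d < b - d ->
  adapted_couple (edge_step a b d M) a b
    (a :: a + d :: b - d :: b :: nil) (M :: 0 :: M :: nil).
Proof.
  intros Hd Hab; unfold adapted_couple; repeat split.
  - intros i Hi; simpl in Hi; destruct i as [|[|[|i]]]; simpl; lra || lia.
  - simpl; rewrite Rmin_left; lra.
  - simpl; rewrite Rmax_right; lra.
  - intros i Hi; simpl in Hi; unfold constant_D_eq, open_interval.
    destruct i as [|[|[|i]]]; simpl; intros x Hx; unfold edge_step;
      repeat destruct Rle_dec; lra || lia.
Qed.

Definition edge_StepFun a b d M (Hd : 0 < d) (Hab : a + d < b - d) : StepFun a b :=
  mkStepFun (existT _ _ (existT _ _ (edge_step_adapted a b d M Hd Hab))).

Lemma RiemannInt_SF_edge a b d M Hd Hab :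
  RiemannInt_SF (edge_StepFun a b d M Hd Hab) = 2 * M * d.
Proof.
  unfold RiemannInt_SF, subdivision, subdivision_val, edge_StepFun; simpl.
  destruct Rle_dec; [simpl; ring | lra].
Qed.

Lemma clamp_edge_error (K : R -> R) a b d B t : 0 <= d -> a + d < b - d ->
  (forall t, a <= t <= b -> Rabs (K t) <= B) -> a <= t <= b ->
  Rabs (K t - K (clamp (a + d) (b - d) t)) <= edge_step a b d (2 * B) t.
Proof.
  intros Hd Hab HB Ht.
  assert (Hc := clamp_between (a + d) (b - d) t ltac:(lra)).
  assert (H2B : Rabs (K t - K (clamp (a + d) (b - d) t)) <= 2 * B).
  { set (c := clamp (a + d) (b - d) t) in *.
    assert (H1 := HB t Ht); assert (H2 := HB c ltac:(lra)).
    assert (H3 := Rle_abs (K t)); assert (H4 := Rabs_maj2 (K t)).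
    assert (H5 := Rle_abs (K c)); assert (H6 := Rabs_maj2 (K c)).
    apply Rabs_le; split; lra. }
  unfold edge_step; destruct Rle_dec; [destruct Rle_dec|]; try exact H2B.
  rewrite clamp_id, Rminus_diag, Rabs_R0 by lra; lra.
Qed.

(* [K] is within [edge_step] of its continuous clamped version [K o clamp],
   which differs from [K] only on the two edges of width [d]. *)
Lemma Riemann_integrable_bounded_continuous_interior (K : R -> R) a b B : a < b ->
  (forall t, a <= t <= b -> Rabs (K t) <= B) ->
  (forall t, a < t < b -> continuity_pt K t) ->
  Riemann_integrable K a b.
Proof.
  intros Hab HB Hcont eps.
  assert (B0 : 0 <= B) by (eapply Rle_trans; [apply Rabs_pos | apply (HB a); lra]).
  assert (Heps := cond_pos eps).
  set (d := Rmin ((b - a) / 4) (eps / (8 * (B + 1)))).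
  assert (Hd : 0 < d) by (apply Rmin_pos; apply Rdiv_lt_0_compat; lra).
  assert (Hdab : a + d < b - d).
  { assert (H := Rmin_l ((b - a) / 4) (eps / (8 * (B + 1)))); fold d in H; lra. }
  assert (HdB : 4 * B * d <= eps / 2).
  { apply Rle_trans with (4 * (B + 1) * (eps / (8 * (B + 1)))).
    - apply Rmult_le_compat; try nra; apply Rmin_r.
    - right; field; lra. }
  set (g := fun t => K (clamp (a + d) (b - d) t)).
  assert (Hg : Riemann_integrable g a b).
  { apply continuity_implies_RiemannInt; [lra|]; intros t _.
    apply (continuity_pt_comp (clamp (a + d) (b - d)) K t (clamp_continuity_pt _ _ t)).
    assert (H := clamp_between (a + d) (b - d) t ltac:(lra)); apply Hcont; lra. }
  assert (Heps2 : 0 < eps / 2) by lra.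
  destruct (Hg (mkposreal _ Heps2)) as [phi [psi [Hphi Hpsi]]].
  exists phi, (mkStepFun (StepFun_P28 1 psi (edge_StepFun a b d (2 * B) Hd Hdab))).
  rewrite Rmin_left, Rmax_right in * by lra; split.
  - intros t Ht; simpl.
    assert (Hedge := clamp_edge_error K a b d B t (Rlt_le _ _ Hd) Hdab HB Ht).
    change (K (clamp (a + d) (b - d) t)) with (g t) in Hedge.
    replace (K t - phi t) with ((K t - g t) + (g t - phi t)) by ring.
    eapply Rle_trans; [apply Rabs_triang|].
    assert (H := Hphi t Ht); lra.
  - rewrite StepFun_P30, RiemannInt_SF_edge.
    eapply Rle_lt_trans; [apply Rabs_triang|].
    rewrite (Rabs_right (1 * (2 * (2 * B) * d))) by nra; simpl in Hpsi; lra.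
Qed.

Section ConvexFunction.

Variables (J : R -> Prop) (K : R -> R).
Hypotheses (HJ : is_interval J) (HK : convex_on J K).

Lemma convex_le_Rmax a b t : J a -> J b -> a < b -> a <= t <= b -> K t <= Rmax (K a) (K b).
Proof.
  intros Ha Hb Hab Ht.
  set (s := (t - a) / (b - a)).
  assert (Hs : 0 <= s <= 1) by (apply ratio_unit_interval; lra).
  replace t with (nabla a b s) by (unfold nabla, s; field; lra).
  eapply Rle_trans; [exact (HK a b s Ha Hb Hs)|].
  unfold nabla; assert (H1 := Rmax_l (K a) (K b)); assert (H2 := Rmax_r (K a) (K b)); nra.
Qed.

(* The lower bound comes from reflecting [t] through the midpoint:
   [K ((a + b) / 2) <= (K t + K (a + b - t)) / 2]. *)
Lemma convex_abs_bound a b t : J a -> J b -> a < b -> a <= t <= b ->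
  Rabs (K t) <= Rabs (Rmax (K a) (K b)) + 2 * Rabs (K ((a + b) / 2)).
Proof.
  intros Ha Hb Hab Ht.
  assert (Jt : J t) by (apply (HJ a t b); auto).
  assert (Jt' : J (a + b - t)) by (apply (HJ a _ b); auto; lra).
  assert (Hup := convex_le_Rmax a b t Ha Hb Hab Ht).
  assert (Hup' := convex_le_Rmax a b (a + b - t) Ha Hb Hab ltac:(lra)).
  assert (Hmid := HK t (a + b - t) (1/2) Jt Jt' ltac:(lra)).
  replace (nabla t (a + b - t) (1/2)) with ((a + b) / 2) in Hmid by (unfold nabla; field).
  unfold nabla in Hmid.
  assert (H1 := Rle_abs (Rmax (K a) (K b))); assert (H2 := Rabs_maj2 (K ((a + b) / 2))).
  assert (H3 := Rabs_pos (K ((a + b) / 2))).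
  apply Rabs_le; split; lra.
Qed.

Lemma convex_increment_bounds t e h : J (t - e) -> J (t + e) -> 0 <= h <= 1 ->
  h * (K t - K (t - e)) <= K (t + h * e) - K t <= h * (K (t + e) - K t).
Proof.
  intros Hl Hr Hh.
  assert (Jt : J t).
  { replace t with (nabla (t - e) (t + e) (1/2)) by (unfold nabla; field).
    apply is_interval_nabla; auto; lra. }
  assert (Jth : J (t + h * e)).
  { replace (t + h * e) with (nabla t (t + e) h) by (unfold nabla; ring).
    apply is_interval_nabla; auto. }
  split.
  - (* [t] lies between [t + h e] and [t - e], at parameter [h / (1 + h)] *)
    assert (H := HK (t + h * e) (t - e) (h / (1 + h)) Jth Hl
                   ltac:(apply ratio_unit_interval; lra)).
    replace (nabla (t + h * e) (t - e) (h / (1 + h))) with t in H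
      by (unfold nabla; field; lra).
    apply (Rmult_le_compat_l (1 + h)) in H; [|lra].
    replace ((1 + h) * nabla (K (t + h * e)) (K (t - e)) (h / (1 + h)))
      with (K (t + h * e) + h * K (t - e)) in H by (unfold nabla; field; lra).
    lra.
  - assert (H := HK t (t + e) h Jt Hr Hh).
    replace (nabla t (t + e) h) with (t + h * e) in H by (unfold nabla; ring).
    unfold nabla in H; lra.
Qed.

Lemma convex_continuity_pt t e : 0 < e -> J (t - e) -> J (t + e) -> continuity_pt K t.
Proof.
  intros He Hl Hr.
  set (C := Rabs (K t - K (t - e)) + Rabs (K (t + e) - K t)).
  assert (HC : 0 <= C) by (unfold C; assert (H1 := Rabs_pos (K t - K (t - e)));
                             assert (H2 := Rabs_pos (K (t + e) - K t)); lra).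
  apply (continuity_pt_lipschitz K t e (C / e)); [lra | apply Rdiv_le_0_compat; lra|].
  intros y Hy; apply Rabs_def2 in Hy.
  destruct (Rle_dec t y) as [Hty | Hyt].
  - set (h := (y - t) / e).
    assert (Hh : 0 <= h <= 1) by (apply ratio_unit_interval; lra).
    replace y with (t + h * e) at 1 by (unfold h; field; lra).
    rewrite (Rabs_right (y - t)) by lra.
    replace (C / e * (y - t)) with (h * C) by (unfold h; field; lra).
    apply Rabs_le_scaled_bounds; [lra|].
    exact (convex_increment_bounds t e h Hl Hr Hh).
  - set (h := (t - y) / e).
    assert (Hh : 0 <= h <= 1) by (apply ratio_unit_interval; lra).
    replace y with (t + h * - e) at 1 by (unfold h; field; lra).
    rewrite (Rabs_left (y - t)) by lra.
    assert (Hb := convex_increment_bounds t (- e) h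
                    ltac:(replace (t - - e) with (t + e) by ring; exact Hr)
                    ltac:(replace (t + - e) with (t - e) by ring; exact Hl) Hh).
    replace (t - - e) with (t + e) in Hb by ring.
    replace (t + - e) with (t - e) in Hb by ring.
    replace (C / e * - (y - t))
      with (h * (Rabs (K t - K (t + e)) + Rabs (K (t - e) - K t)))
      by (unfold h, C; rewrite (Rabs_minus_sym (K t) (K (t + e))),
            (Rabs_minus_sym (K (t - e)) (K t)); field; lra).
    apply Rabs_le_scaled_bounds; [lra | exact Hb].
Qed.

Lemma ex_RInt_convex_lt a b : J a -> J b -> a < b -> ex_RInt K a b.
Proof.
  intros Ha Hb Hab; apply ex_RInt_Reals_1.
  apply (Riemann_integrable_bounded_continuous_interior K a b
           (Rabs (Rmax (K a) (K b)) + 2 * Rabs (K ((a + b) / 2))) Hab).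
  - intros t Ht; exact (convex_abs_bound a b t Ha Hb Hab Ht).
  - intros t Ht; set (e := Rmin (t - a) (b - t)).
    assert (He : 0 < e) by (apply Rmin_pos; lra).
    assert (He1 := Rmin_l (t - a) (b - t)); assert (He2 := Rmin_r (t - a) (b - t)).
    fold e in He1, He2.
    apply (convex_continuity_pt t e He); apply (HJ a _ b); auto; lra.
Qed.

Lemma ex_RInt_convex a b : J a -> J b -> ex_RInt K a b.
Proof.
  intros Ha Hb; destruct (Rtotal_order a b) as [Hab | [<- | Hba]].
  - exact (ex_RInt_convex_lt a b Ha Hb Hab).
  - apply ex_RInt_point.
  - apply ex_RInt_swap; exact (ex_RInt_convex_lt b a Hb Ha Hba).
Qed.

End ConvexFunction.

Lemma convex_on_nabla J f x y : is_interval J -> convex_on J f -> J x -> J y ->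
  convex_on (fun t => 0 <= t <= 1) (fun t => f (nabla x y t)).
Proof.
  intros HJ Hf Hx Hy u v s Hu Hv Hs; cbv beta.
  replace (nabla x y (nabla u v s)) with (nabla (nabla x y u) (nabla x y v) s)
    by (unfold nabla; ring).
  apply Hf; try apply is_interval_nabla; auto.
Qed.

Lemma ex_RInt_convex_segment J f x y : is_interval J -> convex_on J f -> J x -> J y ->
  ex_RInt (fun t => f (nabla x y t)) 0 1.
Proof.
  intros HJ Hf Hx Hy.
  apply (ex_RInt_convex (fun t => 0 <= t <= 1)); try lra.
  - intros u v w Hu Hw Hv; lra.
  - apply (convex_on_nabla J); auto.
Qed.

(* All three points of [Phi_integrand] move on segments ending at [a \nabla_nu b]. *)
Lemma ex_RInt_Phi_integrand J f a b nu : is_interval J -> convex_on J f -> J a -> J b ->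
  0 <= nu <= 1 -> ex_RInt (Phi_integrand f a b nu) 0 1.
Proof.
  intros HJ Hf Ha Hb Hnu.
  set (c := nabla a b nu).
  assert (Hc : J c) by (apply is_interval_nabla; auto).
  assert (Hm : J ((a + b) / 2)).
  { replace ((a + b) / 2) with (nabla a b (1/2)) by (unfold nabla; field).
    apply is_interval_nabla; auto; lra. }
  assert (HP := ex_RInt_convex_segment J f a c HJ Hf Ha Hc).
  assert (HQ := ex_RInt_convex_segment J f b c HJ Hf Hb Hc).
  assert (HM := ex_RInt_convex_segment J f _ c HJ Hf Hm Hc).
  apply (ex_RInt_ext (fun t => / 2 * (f (nabla a c t) + f (nabla b c t))
                               - f (nabla ((a + b) / 2) c t))).
  - intros t _; unfold Phi_integrand, Delta_f, c.
    replace (nabla a (nabla a b nu) t) with (nabla a b (nu * t)) by (unfold nabla; ring).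
    replace (nabla b (nabla a b nu) t) with (nabla a b (1 - (1 - nu) * t))
      by (unfold nabla; ring).
    replace (nabla ((a + b) / 2) (nabla a b nu) t)
      with ((nabla a b (nu * t) + nabla a b (1 - (1 - nu) * t)) / 2)
      by (unfold nabla; field).
    f_equal; unfold Rdiv; apply Rmult_comm.
  - exact (ex_RInt_minus _ _ 0 1
             (ex_RInt_scal _ 0 1 (/ 2) (ex_RInt_plus _ _ 0 1 HP HQ)) HM).
Qed.

Lemma Rmin_dist a b c d e :
  Rabs (a - c) <= e -> Rabs (b - d) <= e -> Rabs (Rmin a b - Rmin c d) <= e.
Proof. unfold Rmin; repeat destruct Rle_dec; unfold Rabs; repeat destruct Rcase_abs; lra. Qed.

Lemma Rmax_dist a b c d e :
  Rabs (a - c) <= e -> Rabs (b - d) <= e -> Rabs (Rmax a b - Rmax c d) <= e.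
Proof. unfold Rmax; repeat destruct Rle_dec; unfold Rabs; repeat destruct Rcase_abs; lra. Qed.

Lemma scaled_dist c x y : 0 <= c <= 1 ->
  Rabs (c * y - c * x) <= Rabs (y - x) /\ Rabs ((1 - c * y) - (1 - c * x)) <= Rabs (y - x).
Proof.
  intros Hc.
  replace ((1 - c * y) - (1 - c * x)) with (- (c * (y - x))) by ring.
  rewrite <- Rmult_minus_distr_l, Rabs_Ropp, Rabs_mult, (Rabs_right c) by lra.
  assert (H := Rabs_pos (y - x)); split; nra.
Qed.

Lemma nabla_dist nu u u' v v' e : 0 <= nu <= 1 ->
  Rabs (u' - u) <= e -> Rabs (v' - v) <= e -> Rabs (nabla u' v' nu - nabla u v nu) <= e.
Proof.
  intros Hnu Hu Hv; unfold nabla.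
  replace ((1 - nu) * u' + nu * v' - ((1 - nu) * u + nu * v))
    with ((1 - nu) * (u' - u) + nu * (v' - v)) by ring.
  eapply Rle_trans; [apply Rabs_triang|].
  rewrite !Rabs_mult, (Rabs_right (1 - nu)), (Rabs_right nu) by lra; nra.
Qed.

Lemma ex_RInt_lipschitz (g : R -> R) a b :
  (forall x y, Rabs (g y - g x) <= Rabs (y - x)) -> ex_RInt g a b.
Proof.
  intros Hg; apply (ex_RInt_continuous (V := R_CompleteNormedModule)); intros z _.
  apply continuity_pt_filterlim, (continuity_pt_lipschitz g z 1 1); try lra.
  intros y _; rewrite Rmult_1_l; apply Hg.
Qed.

Lemma ex_RInt_r_weight nu : 0 <= nu <= 1 -> ex_RInt (r_weight nu) 0 1.
Proof.
  intros Hnu; apply ex_RInt_lipschitz; intros x y; unfold r_weight, r1, r2.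
  destruct (scaled_dist nu x y) as [H1 H2]; [lra|].
  destruct (scaled_dist (1 - nu) x y) as [H3 H4]; [lra|].
  apply (nabla_dist nu); try apply Rmin_dist; assumption.
Qed.

Lemma ex_RInt_R_weight nu : 0 <= nu <= 1 -> ex_RInt (R_weight nu) 0 1.
Proof.
  intros Hnu; apply ex_RInt_lipschitz; intros x y; unfold R_weight, Defs.R1, R2.
  destruct (scaled_dist nu x y) as [H1 H2]; [lra|].
  destruct (scaled_dist (1 - nu) x y) as [H3 H4]; [lra|].
  apply (nabla_dist nu); try apply Rmax_dist; assumption.
Qed.

(** * Integrating the pointwise bounds *)

Lemma is_RInt_le_const (g : R -> R) a b I c : a <= b -> is_RInt g a b I ->
  (forall t, a <= t <= b -> g t <= c) -> I <= c * (b - a).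
Proof.
  intros Hab Hg Hc.
  apply (is_RInt_le g (fun _ => c) a b I _ Hab Hg); [|intros t Ht; apply Hc; lra].
  replace (c * (b - a)) with (scal (b - a) c) by (unfold scal; simpl; unfold mult; simpl; ring).
  apply (is_RInt_const (V := R_NormedModule)).
Qed.

Lemma is_RInt_ge_const (g : R -> R) a b I c : a <= b -> is_RInt g a b I ->
  (forall t, a <= t <= b -> c <= g t) -> c * (b - a) <= I.
Proof.
  intros Hab Hg Hc.
  apply (is_RInt_le (fun _ => c) g a b _ I Hab); [|exact Hg | intros t Ht; apply Hc; lra].
  replace (c * (b - a)) with (scal (b - a) c) by (unfold scal; simpl; unfold mult; simpl; ring).
  apply (is_RInt_const (V := R_NormedModule)).
Qed.

Lemma is_RInt_lin_comb (g w : R -> R) m D :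
  ex_RInt g 0 1 -> ex_RInt w 0 1 ->
  is_RInt (fun t => 2 * (m * g t + w t * D)) 0 1 (2 * (m * RInt g 0 1 + RInt w 0 1 * D)).
Proof.
  intros Hg Hw.
  apply (is_RInt_ext (V := R_NormedModule) (fun t => scal 2 (plus (scal m (g t)) (scal D (w t))))).
  - intros t _; unfold scal, plus; simpl; unfold mult; simpl; ring.
  - replace (2 * (m * RInt g 0 1 + RInt w 0 1 * D))
      with (scal 2 (plus (scal m (RInt g 0 1)) (scal D (RInt w 0 1))))
      by (unfold scal, plus; simpl; unfold mult; simpl; ring).
    apply (is_RInt_scal (V := R_NormedModule)), (is_RInt_plus (V := R_NormedModule));
      apply (is_RInt_scal (V := R_NormedModule)), (RInt_correct (V := R_CompleteNormedModule)); assumption.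
Qed.

Lemma Phi_fE f a b nu : Phi_f f a b nu = RInt (Phi_integrand f a b nu) 0 1.
Proof.
  apply RInt_ext; intros t _; unfold Phi_integrand, Delta_f.
  replace (nabla b a ((1 - nu) * t)) with (nabla a b (1 - (1 - nu) * t))
    by (unfold nabla; ring).
  replace (nabla a b ((1 + t * (2 * nu - 1)) / 2))
    with ((nabla a b (nu * t) + nabla a b (1 - (1 - nu) * t)) / 2) by (unfold nabla; field).
  reflexivity.
Qed.

Theorem corollary2p21 (J : R -> Prop) (f : R -> R) (a b nu : R) :
  is_interval J -> convex_on J f -> J a -> J b -> 0 <= nu <= 1 ->
  2 * (Rmin nu (1 - nu) * Phi_f f a b nu + rtilde nu * Delta_f f a b)
    <= nabla (f a) (f b) nu - f (nabla a b nu)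
  /\ nabla (f a) (f b) nu - f (nabla a b nu)
    <= 2 * (Rmax nu (1 - nu) * Phi_f f a b nu + Rtilde nu * Delta_f f a b).
Proof.
  intros HJ Hf Ha Hb Hnu.
  assert (HPhi := ex_RInt_Phi_integrand J f a b nu HJ Hf Ha Hb Hnu).
  change (nabla (f a) (f b) nu - f (nabla a b nu)) with (jensen_gap f a b nu).
  replace (jensen_gap f a b nu) with (jensen_gap f a b nu * (1 - 0)) by ring.
  rewrite Phi_fE; split.
  - apply (is_RInt_le_const (fun t => 2 * (Rmin nu (1 - nu) * Phi_integrand f a b nu t
                                           + r_weight nu t * Delta_f f a b)) 0 1);
      [lra | apply is_RInt_lin_comb; auto using ex_RInt_r_weight |].
    intros t Ht; apply (jensen_gap_pointwise_bounds J f a b nu t HJ Hf Ha Hb Hnu Ht).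
  - apply (is_RInt_ge_const (fun t => 2 * (Rmax nu (1 - nu) * Phi_integrand f a b nu t
                                           + R_weight nu t * Delta_f f a b)) 0 1);
      [lra | apply is_RInt_lin_comb; auto using ex_RInt_R_weight |].
    intros t Ht; apply (jensen_gap_pointwise_bounds J f a b nu t HJ Hf Ha Hb Hnu Ht).
Qed.
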